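(* Let $0<a<b$, $n\ge1$, and consider the network $T_n$ defined in the context with any resistances $r_e=2^{d(e)-1}X_e$ where every $X_e\in[a,b]$. Let $\Theta^*$ be the unit current flow from the root $r$ to the set of leaves (the unique unit flow attaining the infimum in Thomson's principle $R_n=\inf_{\Theta}\sum_{e}r_e\Theta(e)^2$ over unit flows $\Theta$ from $r$ to the leaves), with $\Theta^*(e)$ denoting the flow through $e$ in the direction away from the root. Then for every edge $e$ of $T_n$, deterministically, $$\Theta^*(e)\le\frac{bn}{a\,(n-d(e)+1)\,2^{d(e)-1}}.$$
   Context: For $n\ge1$, $T_n$ is the edge-rooted tree consisting of a root vertex $r$ joined by a single edge to a vertex $v$, where $v$ is the root of a complete binary tree with $n-1$ levels (so $T_n$ has $2^{n-1}$ leaves at distance $n$ from $r$). The depth $d(e)$ of an edge $e$ is the number of edges on the path that starts with $e$ and ends at $r$; the edge at $r$ has depth $1$. $R_n$ is the effective resistance between $r$ and the set of leaves. A unit flow from $r$ to the leaves is an antisymmetric function on oriented edges with zero net flow at every vertex other than $r$ and the leaves, and net flow $1$ out of $r$ and $1$ into the set of leaves. *)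

From HB Require Import structures.
From mathcomp Require Import all_boot all_order all_algebra.
Set Implicit Arguments. Unset Strict Implicit. Unset Printing Implicit Defensive.
Import Order.TTheory GRing.Theory Num.Theory.
Local Open Scope ring_scope.

(* Vertices other than the root r are the binary strings s : seq bool with
   size s <= n-1; the empty string is v (the child of r), and the children of
   s are (false :: s) and (true :: s).  Leaves are the strings of size n-1.
   Each edge e is identified with its lower endpoint s (size s < n); the edge
   above the empty string is the edge at r.

   A flow (antisymmetric function on oriented edges) is determined by its
   value theta s on each edge oriented away from the root (the value on the
   reversed orientation being -theta s). *)

Definition depth (s : seq bool) : nat := (size s).+1.

Definition unit_flow {R : nzRingType} (n : nat) (theta : seq bool -> R) : Prop :=
  [/\ theta [::] = 1,  (* net flow 1 out of r (r has the single edge [::]) *)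
      (forall s : seq bool, ((size s).+1 < n)%N ->
          theta s = theta (false :: s) + theta (true :: s))
        (* zero net flow at every non-root, non-leaf vertex s *)
    & \sum_(s : (n.-1).-tuple bool) theta s = 1 ].

Definition resist {R : nzRingType} (X : seq bool -> R) (s : seq bool) : R :=
  2 ^+ size s * X s.

Definition energy {R : nzRingType} (n : nat) (X : seq bool -> R)
    (theta : seq bool -> R) : R :=
  \sum_(d < n) \sum_(s : d.-tuple bool) resist X s * theta s ^+ 2.

Definition current_flow {R : realFieldType} (n : nat) (X : seq bool -> R)
    (theta : seq bool -> R) : Prop :=
  unit_flow n theta /\
  forall theta' : seq bool -> R, unit_flow n theta' ->
    energy n X theta <= energy n X theta'.

From HB Require Import structures.
From mathcomp Require Import all_boot all_order all_algebra.
From mathcomp Require Import ring lra.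
Set Implicit Arguments. Unset Strict Implicit. Unset Printing Implicit Defensive.
Import Order.TTheory GRing.Theory Num.Theory.
Local Open Scope ring_scope.

(* Thomson's principle makes the current flow θ orthogonal, for the energy
   form, to every difference of unit flows, so its pairing with any unit flow
   equals its energy, which is at most the energy n b of the uniform flow.
   Pair θ with the unit flow that runs along the path from the root to the edge
   e and continues below e as θ / θ(e).  As θ >= 0 (otherwise moving flow
   between the subtrees of two siblings would lower the energy), this pairing
   is at least θ(e)^-1 times the energy of θ below e; and by Cauchy-Schwarz
   each of the n - d(e) + 1 levels below e carries energy at least
   a 2^(d(e)-1) θ(e)^2. *)

Lemma suffix_consr {T : eqType} (w v : seq T) x :
  suffix w (x :: v) = (w == x :: v) || suffix w v.
Proof.
apply/suffixP/orP => [[[|y p] /= E] | [/eqP -> | /suffixP [p ->]]].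
- by left; rewrite E.
- by case: E => _ ->; right; apply: suffix_suffix.
- by exists [::].
- by exists (x :: p).
Qed.

Lemma suffix_sizeF {T : eqType} (w v : seq T) :
  (size v < size w)%N -> suffix w v = false.
Proof. by move=> lt_vw; apply/negbTE/negP => /size_suffix; rewrite leqNgt lt_vw. Qed.

Lemma suffix_children (v s : seq bool) :
  (suffix (false :: v) s + suffix (true :: v) s)%N = suffix v s && (v != s).
Proof.
elim: s => [|y s IH]; first by rewrite !suffixs0 andbN.
rewrite !suffix_consr !eqseq_cons.
have [<- | nvs] := eqVneq v s.
  have nvv : (v == y :: v) = false by apply/eqP => /(congr1 size)/eqP; rewrite ltn_eqF.
  by rewrite suffix_refl nvv !suffix_sizeF // !andbT !orbF; case: (y).
rewrite !andbF !orFb IH nvs andbT.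
have [-> | ] := eqVneq v (y :: s); last by rewrite orFb andbT.
by rewrite suffix_sizeF.
Qed.

Lemma big_tuple0 (T : finType) (V : nmodType) (F : seq T -> V) :
  \sum_(t : 0.-tuple T) F t = F [::].
Proof. by rewrite (big_pred1 [tuple]) // => t; apply/esym/eqP; exact: tuple0. Qed.

Lemma big_tuple_cons (T : finType) (V : nmodType) j (F : seq T -> V) :
  \sum_(t : j.+1.-tuple T) F t = \sum_(t : j.-tuple T) \sum_(x : T) F (x :: t).
Proof.
rewrite (reindex (fun p : T * j.-tuple T => [tuple of p.1 :: p.2])) /=; last first.
  exists (fun t : j.+1.-tuple T => (thead t, [tuple of behead t])) => [[x t] _|t _] /=.
    by rewrite theadE; congr pair; apply: val_inj.
  by rewrite -tuple_eta.
by rewrite exchange_big pair_big.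
Qed.

Definition is_child (w v : seq bool) : bool := if w is _ :: u then u == v else false.

Lemma sum_is_child (w : seq bool) j :
  (\sum_(t : j.-tuple bool) is_child w t)%N = (size w == j.+1).
Proof.
case: w => [|x u] /=; first by rewrite big1.
rewrite eqSS; have [su | nsu] := boolP (size u == j).
  rewrite (bigD1 (Tuple su)) //= eqxx big1 // => t /eqP ne_t.
  by case: eqP => // ut; case: ne_t; apply: val_inj.
by rewrite big1 // => t _; case: eqP => // ut; rewrite ut size_tuple eqxx in nsu.
Qed.

Definition kirchhoff {V : nmodType} (n : nat) (f : seq bool -> V) : Prop :=
  forall v : seq bool, ((size v).+1 < n)%N -> f v = f (false :: v) + f (true :: v).

(* The edges of the subtree below [w] are the strings having [w] as a suffix. *)
Definition subflow {V : nmodType} (f : seq bool -> V) (w s : seq bool) : V :=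
  if suffix w s then f s else 0.

Section KirchhoffSums.
Variables (V : nmodType) (n : nat) (f : seq bool -> V).
Hypothesis kf : kirchhoff n f.

Lemma subflow_children w v : ((size v).+1 < n)%N ->
  subflow f w (false :: v) + subflow f w (true :: v) = subflow f w v + f w *+ is_child w v.
Proof.
move=> ltvn; rewrite /subflow !suffix_consr.
case: w => [|x u] /=; first by rewrite !suffix0s mulr0n addr0 (kf ltvn).
rewrite !eqseq_cons; have [<- | nuv] := eqVneq u v.
  rewrite (@suffix_sizeF _ (x :: u)) // !andbT !orbF add0r mulr1n.
  by case: x; rewrite ?addr0 ?add0r.
rewrite !andbF !orFb mulr0n addr0; case: ifP => _; last by rewrite addr0.
by rewrite (kf ltvn).
Qed.

Lemma sum_level_subflow w j : (j < n)%N ->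
  \sum_(s : j.-tuple bool) subflow f w s = f w *+ (size w <= j).
Proof.
elim: j => [|j IH] ltjn.
  by rewrite big_tuple0 /subflow suffixs0 leqn0 size_eq0; case: eqP => [->|].
rewrite big_tuple_cons.
under eq_bigr => t _ do rewrite big_bool /= addrC subflow_children ?size_tuple //.
rewrite big_split /= (IH (ltnW ltjn)) sumrMnr sum_is_child -mulrnDr.
by rewrite [(size w <= j.+1)%N]leq_eqVlt ltnS; case: eqP => [->|_]; rewrite ?ltnn ?addn0.
Qed.

Lemma sum_level j : (j < n)%N -> \sum_(s : j.-tuple bool) f s = f [::].
Proof.
move=> ltjn; rewrite -[RHS]mulr1n -(@sum_level_subflow [::] j ltjn).
by apply: eq_bigr => s _; rewrite /subflow suffix0s.
Qed.

Lemma sum_leaves : \sum_(s : (n.-1).-tuple bool) f s = f [::].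
Proof.
have [n0 | n_gt0] := posnP n; first by rewrite n0 big_tuple0.
by rewrite sum_level // ltn_predL.
Qed.

End KirchhoffSums.

Lemma kirchhoff_unit_flow (R : nzRingType) n (f : seq bool -> R) :
  f [::] = 1 -> kirchhoff n f -> unit_flow n f.
Proof. by move=> f1 kf; split; rewrite // sum_leaves. Qed.

Definition uniform_flow {R : numFieldType} (s : seq bool) : R := (2 ^+ size s)^-1.

Lemma uniform_flow_nil (R : numFieldType) : uniform_flow [::] = 1 :> R.
Proof. by rewrite /uniform_flow expr0 invr1. Qed.

Lemma kirchhoff_uniform (R : numFieldType) n : kirchhoff n (@uniform_flow R).
Proof.
move=> v _; rewrite /uniform_flow /= exprS.
by field; rewrite expf_neq0 // pnatr_eq0.
Qed.

Lemma uniform_flow_unit (R : numFieldType) n : unit_flow n (@uniform_flow R).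
Proof. by apply: kirchhoff_unit_flow; [exact: uniform_flow_nil | exact: kirchhoff_uniform]. Qed.

Definition path_flow {R : nzRingType} (s v : seq bool) : R := (suffix v s && (v != s))%:R.

Lemma path_flow_children (R : nzRingType) (s v : seq bool) :
  path_flow s (false :: v) + path_flow s (true :: v) + (is_child s v)%:R = path_flow s v :> R.
Proof.
rewrite /path_flow -!natrD; apply: congr1.
case: s => [|y u]; first by rewrite !suffixs0 !andbN.
rewrite -(suffix_children v (y :: u)) /=; have [<- | nuv] := eqVneq u v.
  by rewrite !suffix_consr !eqseq_cons !eqxx !(@suffix_sizeF _ (_ :: u) u) //; case: y.
by rewrite !eqseq_cons [v == u]eq_sym (negbTE nuv) !andbF !andbT addn0.
Qed.

Section SubflowCombinations.
Variables (R : fieldType) (n : nat) (f : seq bool -> R).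
Hypothesis kf : kirchhoff n f.

Lemma kirchhoff_sibling_subflows c p :
  kirchhoff n (fun v => f (~~ c :: p) * subflow f (c :: p) v - f (c :: p) * subflow f (~~ c :: p) v).
Proof.
move=> v ltvn; have Ew := subflow_children kf (c :: p) ltvn.
have Ew' := subflow_children kf (~~ c :: p) ltvn; rewrite /= in Ew Ew'.
by rewrite addrACA -mulrDr -opprD -mulrDr Ew Ew'; ring.
Qed.

Lemma unit_flow_path_subflow s : f s != 0 ->
  unit_flow n (fun v => (f s)^-1 * subflow f s v + path_flow s v).
Proof.
move=> fs_neq0; apply: kirchhoff_unit_flow => [|v ltvn].
  rewrite /subflow /path_flow suffixs0 suffix0s /=.
  by case: s fs_neq0 => [|x u] fs_neq0 /=; rewrite ?mulVf ?mulr0 ?addr0 ?add0r.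
have Es := subflow_children kf s ltvn; have Ps := path_flow_children R s v.
by rewrite addrACA -mulrDr Es -Ps; field.
Qed.

End SubflowCombinations.

Lemma eq0_of_quadratic_ge0 (R : realFieldType) (c q : R) :
  (forall e, 0 <= e * (c + e * q)) -> c = 0.
Proof.
move=> quad_ge0; set d := `|q| + 1.
have d_gt0 : 0 < d by rewrite ltr_wpDl.
have := quad_ge0 (- c / d).
have -> : - c / d * (c + - c / d * q) = c ^+ 2 * (q - d) / d ^+ 2.
  by field; rewrite gt_eqF.
have qd_lt0 : q - d < 0 by rewrite subr_lt0 /d ltr_pwDr // ler_norm.
rewrite pmulr_lge0 ?invr_gt0 ?exprn_gt0 // nmulr_lge0 // => c2_le0.
by apply/eqP; rewrite -sqrf_eq0 eq_le c2_le0 sqr_ge0.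
Qed.

Lemma le_tangent_sqr (R : realFieldType) (p y z : R) :
  0 < p -> 2 * z * y - z ^+ 2 / p <= p * y ^+ 2.
Proof.
move=> p_gt0; rewrite -subr_ge0.
have -> : p * y ^+ 2 - (2 * z * y - z ^+ 2 / p) = (p * y - z) ^+ 2 / p.
  by field; rewrite gt_eqF.
by rewrite divr_ge0 ?sqr_ge0 ?ltW.
Qed.

Section EnergyForm.
Variables (R : realFieldType) (n : nat) (X : seq bool -> R).

Definition energy_form (f g : seq bool -> R) : R :=
  \sum_(d < n) \sum_(s : d.-tuple bool) resist X s * f s * g s.

Lemma energyE f : energy n X f = energy_form f f.
Proof. by apply: eq_bigr => d _; apply: eq_bigr => s _; rewrite expr2 mulrA. Qed.

Lemma energy_formDr f g h :
  energy_form f (fun s => g s + h s) = energy_form f g + energy_form f h.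
Proof.
rewrite /energy_form -big_split; apply: eq_bigr => d _.
by rewrite -big_split; apply: eq_bigr => s _ /=; rewrite mulrDr.
Qed.

Lemma energy_formBr f g h :
  energy_form f (fun s => g s - h s) = energy_form f g - energy_form f h.
Proof.
rewrite /energy_form -sumrB; apply: eq_bigr => d _.
by rewrite -sumrB; apply: eq_bigr => s _ /=; rewrite mulrBr.
Qed.

Lemma energy_formZr f g c :
  energy_form f (fun s => c * g s) = c * energy_form f g.
Proof.
rewrite /energy_form mulr_sumr; apply: eq_bigr => d _.
by rewrite mulr_sumr; apply: eq_bigr => s _ /=; rewrite mulrCA.
Qed.

Lemma energy_form_ge0 f g :
  (forall s, (size s < n)%N -> 0 <= resist X s * f s * g s) -> 0 <= energy_form f g.
Proof.
by move=> fg_ge0; do 2!apply: sumr_ge0 => ? _; rewrite fg_ge0 ?size_tuple.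
Qed.

Lemma energy_shift f g e :
  energy n X (fun s => f s + e * g s) =
  energy n X f + e * (2 * energy_form f g + e * energy_form g g).
Proof.
rewrite /energy /energy_form mulrDr !mulr_sumr -!big_split; apply: eq_bigr => d _.
by rewrite !mulr_sumr -!big_split; apply: eq_bigr => s _ /=; ring.
Qed.

End EnergyForm.

Lemma energy_uniform_le (R : realFieldType) n (X : seq bool -> R) b :
  (forall s, (size s < n)%N -> X s <= b) -> energy n X uniform_flow <= n%:R * b.
Proof.
move=> Xb; rewrite -[n in n%:R]card_ord mulr_natl -sumr_const.
apply: ler_sum => d _.
rewrite -[leRHS]mulr1 -(uniform_flow_nil R) -(sum_level (@kirchhoff_uniform R n) (ltn_ord d)).
rewrite mulr_sumr; apply: ler_sum => s _; rewrite /resist /uniform_flow.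
have -> : 2 ^+ size s * X s * ((2 ^+ size s)^-1) ^+ 2 = X s * (2 ^+ size s)^-1 :> R.
  by field; rewrite expf_neq0 // pnatr_eq0.
by rewrite ler_wpM2r ?invr_ge0 ?exprn_ge0 // Xb ?size_tuple.
Qed.

Section SubflowEnergy.
Variables (R : realFieldType) (n : nat) (X : seq bool -> R) (a : R).
Hypotheses (a_ge0 : 0 <= a) (Xa : forall s, (size s < n)%N -> a <= X s).

Lemma resist_ge0 s : (size s < n)%N -> 0 <= resist X s.
Proof. by move=> lt_sn; rewrite mulr_ge0 ?exprn_ge0 // (le_trans a_ge0) ?Xa. Qed.

(* Cauchy-Schwarz on level [j] of the subtree below [w], in the tangent form
   [le_tangent_sqr] with [z = 2^|w| f w]; the uniform flow supplies the
   weights [2^-j] summing to [2^-|w|]. *)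
Lemma energy_level_subflow_ge f w j : kirchhoff n f -> (j < n)%N -> (size w <= j)%N ->
  a * 2 ^+ size w * f w ^+ 2 <= \sum_(s : j.-tuple bool) resist X s * f s * subflow f w s.
Proof.
move=> kf lt_jn le_wj; set K : R := 2 ^+ size w; set z := K * f w.
have tangent_sum : \sum_(s : j.-tuple bool)
    (2 * z * subflow f w s - z ^+ 2 * subflow uniform_flow w s) = K * f w ^+ 2.
  rewrite sumrB -!mulr_sumr (sum_level_subflow kf w lt_jn).
  rewrite (sum_level_subflow (@kirchhoff_uniform R n) w lt_jn) le_wj !mulr1n.
  by rewrite /uniform_flow -/K /z; field; rewrite expf_neq0 // pnatr_eq0.
rewrite -mulrA -tangent_sum mulr_sumr; apply: ler_sum => s _.
rewrite /subflow; case: ifP => _; last by rewrite !mulr0 subrr mulr0.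
rewrite /resist /uniform_flow size_tuple.
have tangent := le_tangent_sqr (f s) z (exprn_gt0 j (ltr0Sn R 1)).
have le_aX : a <= X s by apply: Xa; rewrite size_tuple.
apply: le_trans (ler_wpM2l a_ge0 tangent) _.
have -> : 2 ^+ j * X s * f s * f s = X s * (2 ^+ j * f s ^+ 2) by ring.
by apply: ler_wpM2r; first exact: mulr_ge0 (exprn_ge0 _ (ler0n R 2)) (sqr_ge0 _).
Qed.

Lemma energy_subflow_ge f w : kirchhoff n f -> (size w < n)%N ->
  (n - size w)%:R * (a * 2 ^+ size w * f w ^+ 2) <= energy_form n X f (subflow f w).
Proof.
move=> kf lt_wn.
rewrite mulr_natl -sumr_const_nat big_geq_mkord /energy_form.
rewrite [leRHS](bigID (fun d : 'I_n => size w <= d)%N) /= -[leLHS]addr0.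
apply: lerD; first by apply: ler_sum => d le_wd; apply: energy_level_subflow_ge.
apply: sumr_ge0 => d _; apply: sumr_ge0 => s _; rewrite /subflow.
case: ifP => _; last by rewrite mulr0.
by rewrite -mulrA mulr_ge0 ?resist_ge0 ?size_tuple // -expr2 sqr_ge0.
Qed.

End SubflowEnergy.

Section CurrentFlow.
Variables (R : realFieldType) (n : nat) (X theta : seq bool -> R).
Hypothesis ctheta : current_flow n X theta.

Lemma current_flow_orthogonal eta : eta [::] = 0 -> kirchhoff n eta ->
  energy_form n X theta eta = 0.
Proof.
move=> eta0 keta; have [[theta1 ktheta _] theta_min] := ctheta.
suff : 2 * energy_form n X theta eta = 0 by move/eqP; rewrite mulf_eq0 pnatr_eq0 => /eqP.
apply: (@eq0_of_quadratic_ge0 _ _ (energy_form n X eta eta)) => e.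
rewrite -(lerD2l (energy n X theta)) addr0 -energy_shift; apply: theta_min.
apply: kirchhoff_unit_flow => [|v ltvn]; first by rewrite theta1 eta0 mulr0 addr0.
by rewrite ktheta // keta //; ring.
Qed.

Lemma current_flow_pair_unit phi : unit_flow n phi ->
  energy_form n X theta phi = energy n X theta.
Proof.
move=> [phi1 kphi _]; have [[theta1 ktheta _] _] := ctheta.
rewrite energyE; apply/subr0_eq; rewrite -energy_formBr.
apply: current_flow_orthogonal => [|v ltvn]; first by rewrite phi1 theta1 subrr.
by rewrite kphi // ktheta //; ring.
Qed.

Variable a : R.
Hypotheses (a_gt0 : 0 < a) (Xa : forall s, (size s < n)%N -> a <= X s).

Lemma current_flow_ge0 v : (size v < n)%N -> 0 <= theta v.
Proof.
have [[theta1 ktheta _] _] := ctheta.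
elim: v => [|c p IH] lt_vn; first by rewrite theta1 ler01.
rewrite leNgt; apply/negP => theta_lt0.
(* Then the sibling carries positive flow, and trading the subflow below
   [c :: p] against the sibling's gives a variation with positive pairing. *)
have theta_sib_gt0 : 0 < theta (~~ c :: p).
  by have := IH (ltnW lt_vn); rewrite (ktheta p lt_vn); case: (c) theta_lt0 => /= *; lra.
have eta0 : theta (~~ c :: p) * subflow theta (c :: p) [::]
    - theta (c :: p) * subflow theta (~~ c :: p) [::] = 0.
  by rewrite /subflow !suffixs0 /= !mulr0 subrr.
have := current_flow_orthogonal eta0 (kirchhoff_sibling_subflows ktheta c p).
rewrite energy_formBr !energy_formZr.
have S_gt0 : 0 < energy_form n X theta (subflow theta (c :: p)).
  apply: lt_le_trans (energy_subflow_ge (ltW a_gt0) Xa ktheta lt_vn).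
  have sqr_gt0 : 0 < theta (c :: p) ^+ 2 by rewrite expr2 nmulr_rgt0.
  by rewrite mulr_gt0 ?ltr0n ?subn_gt0 // (mulr_gt0 (mulr_gt0 a_gt0 (exprn_gt0 _ (ltr0Sn R 1)))).
have S'_ge0 : 0 <= energy_form n X theta (subflow theta (~~ c :: p)).
  have lt_v'n : (size (~~ c :: p) < n)%N by [].
  apply: le_trans (energy_subflow_ge (ltW a_gt0) Xa ktheta lt_v'n).
  exact: mulr_ge0 (ler0n _ _) (mulr_ge0 (mulr_ge0 (ltW a_gt0) (exprn_ge0 _ (ler0n R 2))) (sqr_ge0 _)).
have opp_theta_ge0 : 0 <= - theta (c :: p) by rewrite oppr_ge0 ltW.
have := mulr_gt0 theta_sib_gt0 S_gt0; have := mulr_ge0 opp_theta_ge0 S'_ge0.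
lra.
Qed.

Lemma current_flow_edge_le_energy s : (size s < n)%N ->
  (n - size s)%:R * (a * 2 ^+ size s * theta s) <= energy n X theta.
Proof.
move=> lt_sn; have [[_ ktheta _] _] := ctheta.
have resistX_ge0 := resist_ge0 (ltW a_gt0) Xa.
have [theta_le0 | theta_gt0] := lerP (theta s) 0.
  apply: (@le_trans _ _ 0).
    exact: mulr_ge0_le0 (ler0n _ _)
      (mulr_ge0_le0 (mulr_ge0 (ltW a_gt0) (exprn_ge0 _ (ler0n R 2))) theta_le0).
  rewrite energyE energy_form_ge0 // => v lt_vn.
  by rewrite -mulrA mulr_ge0 ?resistX_ge0 // -expr2 sqr_ge0.
have theta_neq0 := lt0r_neq0 theta_gt0.
(* Pair with the unit flow running from the root down to [s], then as θ / θ(s). *)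
rewrite -(current_flow_pair_unit (unit_flow_path_subflow ktheta theta_neq0)).
rewrite energy_formDr energy_formZr.
have path_ge0 : 0 <= energy_form n X theta (path_flow s).
  apply: energy_form_ge0 => v lt_vn.
  exact: mulr_ge0 (mulr_ge0 (resistX_ge0 _ lt_vn) (current_flow_ge0 lt_vn)) (ler0n _ _).
have subflow_ge := energy_subflow_ge (ltW a_gt0) Xa ktheta lt_sn.
rewrite -[leLHS]addr0 lerD //.
have -> : (n - size s)%:R * (a * 2 ^+ size s * theta s)
    = (theta s)^-1 * ((n - size s)%:R * (a * 2 ^+ size s * theta s ^+ 2)) by field.
by rewrite ler_wpM2l // invr_ge0 ltW.
Qed.

End CurrentFlow.

Unset Implicit Arguments.

Theorem lemma6 (R : realFieldType) (a b : R) (n : nat)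
    (X : seq bool -> R) (theta : seq bool -> R) :
  0 < a -> a < b -> (1 <= n)%N ->
  (forall s : seq bool, (size s < n)%N -> a <= X s <= b) ->
  current_flow n X theta ->
  forall s : seq bool, (size s < n)%N ->
    theta s <= (b * n%:R) / (a * (n - size s)%:R * 2 ^+ size s).
Proof.
move=> a_gt0 _ _ Xab ctheta s lt_sn.
have Xa v : (size v < n)%N -> a <= X v by move/Xab/andP=> [].
have Xb v : (size v < n)%N -> X v <= b by move/Xab/andP=> [].
have energy_le : energy n X theta <= n%:R * b.
  exact: le_trans (ctheta.2 _ (uniform_flow_unit R n)) (energy_uniform_le Xb).
rewrite ler_pdivlMr; last by rewrite !mulr_gt0 ?ltr0n ?subn_gt0 ?exprn_gt0.
have -> : theta s * (a * (n - size s)%:R * 2 ^+ size s)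
    = (n - size s)%:R * (a * 2 ^+ size s * theta s) by ring.
rewrite [b * _]mulrC.
exact: le_trans (current_flow_edge_le_energy ctheta a_gt0 Xa lt_sn) energy_le.
Qed.
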